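(* Consider a general RLCM with a $J\times K$ binary $Q$-matrix $Q$ having no all-zero row. If some column of $Q$ contains fewer than three entries equal to $1$ (i.e., some attribute is required by at most two items), then for any model parameters $(\boldsymbol\Theta,\boldsymbol p)$ associated with $Q$ there exist infinitely many $(\bar Q,\bar{\boldsymbol\Theta},\bar{\boldsymbol p})\not\sim(Q,\boldsymbol\Theta,\boldsymbol p)$ yielding the same distribution of the response vector $\boldsymbol R$; in particular $(Q,\boldsymbol\Theta,\boldsymbol p)$ are not generically identifiable. Thus the condition that each column of $Q$ contains at least three entries $1$ is necessary for joint generic identifiability.
   Context: A $Q$-matrix is a $J\times K$ binary matrix with rows $\boldsymbol q_j$. For $\boldsymbol\alpha,\boldsymbol q\in\{0,1\}^K$, $\boldsymbol\alpha\succeq\boldsymbol q$ means $\alpha_k\ge q_k$ for all $k$, and $\odot$ is the elementwise product. An RLCM: latent $\boldsymbol A\in\{0,1\}^K$ with $P(\boldsymbol A=\boldsymbol\alpha)=p_{\boldsymbol\alpha}>0$, $\sum p_{\boldsymbol\alpha}=1$; given $\boldsymbol A=\boldsymbol\alpha$, responses $R_1,\ldots,R_J\in\{0,1\}$ independent with $P(R_j=1\mid\boldsymbol\alpha)=\theta_{j,\boldsymbol\alpha}$, $\boldsymbol\Theta=(\theta_{j,\boldsymbol\alpha})_{J\times2^K}$. $Q$ constrains $\boldsymbol\Theta$ by: $\theta_{j,\boldsymbol\alpha}=\theta_{j,\boldsymbol\alpha'}$ whenever $\boldsymbol\alpha\odot\boldsymbol q_j=\boldsymbol\alpha'\odot\boldsymbol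 q_j$, and monotonicity $\theta_{j,\boldsymbol\alpha}>\theta_{j,\boldsymbol\alpha'}$ whenever $\boldsymbol\alpha\succeq\boldsymbol q_j$ and $\boldsymbol\alpha'\not\succeq\boldsymbol q_j$. In a general RLCM (e.g. the GDINA model $\theta_{j,\boldsymbol\alpha}=\sum_{S\subseteq\{k:q_{j,k}=1\}}\beta_{j,S}\prod_{k\in S}\alpha_k$), apart from these constraints the values $\theta_{j,\boldsymbol\alpha}$ for distinct patterns $\boldsymbol\alpha\odot\boldsymbol q_j$ are free parameters, modelling all main and interaction effects of the required attributes; the parameter space is full-dimensional in $\mathbb R^m$. $(\bar Q,\bar{\boldsymbol\Theta},\bar{\boldsymbol p})\sim(Q,\boldsymbol\Theta,\boldsymbol p)$ means $\bar Q$ equals $Q$ up to column permutation and parameters coincide (after relabeling attributes). $(Q,\boldsymbol\Theta,\boldsymbol p)$ are generically identifiable if the set of $(\boldsymbol\Theta,\boldsymbol p)$ in the parameter space for which some $(\bar Q,\bar{\boldsymbol\Theta},\bar{\boldsymbol p})\not\sim(Q,\boldsymbol\Theta,\boldsymbol p)$ (with $\bar Q$ a $J\times K$ binary matrix and valid general RLCM parameters) gives the same distribution of $\boldsymbol R$ has Lebesgue measure zero. *)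

From HB Require Import structures.
From mathcomp Require Import all_boot all_order all_algebra all_fingroup.
From mathcomp Require Import reals.
Set Implicit Arguments. Unset Strict Implicit. Unset Printing Implicit Defensive.
Import Order.TTheory GRing.Theory Num.Theory.
Local Open Scope ring_scope.

Definition attr (K : nat) := {ffun 'I_K -> bool}.
Definition qmatrix (J K : nat) := 'M[bool]_(J, K).
Definition itemparams (R : realType) (J K : nat) := 'I_J -> attr K -> R.
Definition propparams (R : realType) (K : nat) := attr K -> R.

Definition dominates J K (Q : qmatrix J K) (j : 'I_J) (a : attr K) : bool :=
  [forall k, Q j k ==> a k].

Definition masked J K (Q : qmatrix J K) (j : 'I_J) (a : attr K) : attr K :=
  [ffun k => a k && Q j k].

Definition valid_params (R : realType) J K (Q : qmatrix J K)
    (T : itemparams R J K) (p : propparams R K) : Prop :=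
  (forall a, 0 < p a) /\ (\sum_(a : attr K) p a = 1) /\
  (forall j a, 0 < T j a < 1) /\
  (forall j a a', masked Q j a = masked Q j a' -> T j a = T j a') /\
  (forall j a a', dominates Q j a -> ~~ dominates Q j a' -> T j a' < T j a).

Definition resp_distr (R : realType) J K (T : itemparams R J K) (p : propparams R K)
    (r : {ffun 'I_J -> bool}) : R :=
  \sum_(a : attr K) p a * \prod_(j < J) (if r j then T j a else 1 - T j a).

(* relabel an attribute profile along a permutation s of the attributes:
   attribute k of the new labelling is attribute s k of the old one *)
Definition relabel K (s : 'S_K) (a : attr K) : attr K := [ffun k => a ((s^-1)%g k)].

Definition model_equiv (R : realType) J K
    (Qb : qmatrix J K) (Tb : itemparams R J K) (pb : propparams R K)
    (Q : qmatrix J K) (T : itemparams R J K) (p : propparams R K) : Prop :=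
  exists s : 'S_K,
    (forall j k, Qb j k = Q j (s k)) /\
    (forall j a, Tb j a = T j (relabel s a)) /\
    (forall a, pb a = p (relabel s a)).

From HB Require Import structures.
From mathcomp Require Import all_boot all_order all_algebra all_fingroup.
From mathcomp Require Import reals boolp ring lra.
Set Implicit Arguments. Unset Strict Implicit. Unset Printing Implicit Defensive.
Import Order.TTheory GRing.Theory Num.Theory.
Local Open Scope ring_scope.

(* Let k0 be an attribute required by at most two items, a1 the full profile
   and a0 the profile lacking only k0.  Only the items requiring k0 separate a1
   from a0, so on these two classes every item probability is affine in one
   parameter t (a1 sits at t = p a0, a0 at t = - p a1) and, as at most two items
   vary, every response probability is a polynomial of degree at most 2 in t.
   Any other two-point law for t with the same mass, mean and second moment
   therefore gives the same distribution of R; moving the points to l * p a0 and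
   - p a1 / l and reweighting gives one for every l > 0.  Making the items that
   require k0 require every attribute keeps the new parameters admissible, and
   since only finitely many models are equivalent to (Q, T, p), all but finitely
   many members of this family are new. *)

Lemma horner_sum_eq_moments (R : comNzRingType) (I1 I2 : finType) (n : nat)
    (w1 t1 : I1 -> R) (w2 t2 : I2 -> R) (P : {poly R}) :
  (size P <= n)%N ->
  (forall i, (i < n)%N -> \sum_l w1 l * t1 l ^+ i = \sum_l w2 l * t2 l ^+ i) ->
  \sum_l w1 l * P.[t1 l] = \sum_l w2 l * P.[t2 l].
Proof.
move=> szP moments.
have expand (I : finType) (w t : I -> R) :
    \sum_l w l * P.[t l] = \sum_(i < n) P`_i * \sum_l w l * t l ^+ i.
  under eq_bigr do rewrite (horner_coef_wide _ szP) mulr_sumr.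
  rewrite exchange_big; apply: eq_bigr => i _; rewrite mulr_sumr.
  by apply: eq_bigr => l _; rewrite mulrCA.
by rewrite !expand; apply: eq_bigr => i /= _; rewrite moments.
Qed.

Lemma size_prod_affine (R : comNzRingType) (I : finType) (S : {set I})
    (c d : I -> R) :
  (forall i, i \notin S -> d i = 0) ->
  (size (\prod_i ((c i)%:P + d i *: 'X))%R <= #|S|.+1)%N.
Proof.
move=> d_out.
have size_factor i : (size ((c i)%:P + d i *: 'X)%R <= 1 + nat_of_bool (i \in S))%N.
  have [iS|iS] := boolP (i \in S); last first.
    by rewrite d_out // scale0r addr0 size_polyC_leq1.
  rewrite (leq_trans (size_polyD _ _)) // geq_max.
  rewrite (leq_trans (size_polyC_leq1 _)) //=.
  by rewrite (leq_trans (size_scale_leq _ _)) // size_polyX.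
apply: leq_trans (size_poly_prod_leq _ _) _.
rewrite (@leq_trans ((\sum_i (1 + nat_of_bool (i \in S))).+1 - #|I|)%N) //.
  by rewrite leq_sub2r // ltnS leq_sum.
have card_S : (\sum_i nat_of_bool (i \in S))%N = #|S|.
  by rewrite -sum1_card [RHS]big_mkcond; apply: eq_bigr => i _; case: (i \in S).
by rewrite big_split /= sum1_card card_S -addnS (addKn #|I|).
Qed.

Lemma horner_response_factor (R : comNzRingType) (b : bool) (c d t : R) :
  ((if b then c else 1 - c)%:P + ((if b then 1 else -1) * d) *: 'X).[t] =
  (if b then c + t * d else 1 - (c + t * d)).
Proof. by rewrite hornerD hornerC hornerZ hornerX; case: b; ring. Qed.

Section TwoPointLaws.

Variables (F : realFieldType) (p0 p1 : F).
Hypotheses (p0_gt0 : 0 < p0) (p1_gt0 : 0 < p1).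

Definition pair_weight (l : F) (b : bool) : F :=
  (p0 + p1) * (if b then p1 else l ^+ 2 * p0) / (p1 + l ^+ 2 * p0).

Definition pair_point (l : F) (b : bool) : F := if b then l * p0 else - (p1 / l).

Lemma pair_weight1 b : pair_weight 1 b = if b then p1 else p0.
Proof.
have ne0 : p1 + p0 != 0 by rewrite gt_eqF ?addr_gt0.
by rewrite /pair_weight expr1n !mul1r; case: b; field; rewrite ne0.
Qed.

Lemma pair_point1 b : pair_point 1 b = if b then p0 else - p1.
Proof. by rewrite /pair_point mul1r divr1. Qed.

Lemma pair_weight_gt0 l b : 0 < l -> 0 < pair_weight l b.
Proof.
move=> l_gt0; have p0l_gt0 : 0 < l ^+ 2 * p0 by rewrite mulr_gt0 ?exprn_gt0.
by rewrite /pair_weight; case: b; rewrite ?(divr_gt0, mulr_gt0, addr_gt0).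
Qed.

Lemma pair_moments l i : 0 < l -> (i < 3)%N ->
  \sum_b pair_weight l b * pair_point l b ^+ i =
  \sum_b pair_weight 1 b * pair_point 1 b ^+ i.
Proof.
move=> l_gt0 i_lt3.
have l_neq0 : l != 0 by rewrite gt_eqF.
have den_neq0 : p1 + l ^+ 2 * p0 != 0.
  by rewrite gt_eqF // addr_gt0 // mulr_gt0 // exprn_gt0.
rewrite !big_bool !pair_weight1 !pair_point1 /pair_weight /pair_point /=.
by case: i i_lt3 => [|[|[|]]] // _; field; rewrite l_neq0 den_neq0.
Qed.

Lemma pair_weight_inj l m : 0 < l -> 0 < m ->
  pair_weight l true = pair_weight m true -> l = m.
Proof.
move=> l_gt0 m_gt0; rewrite /pair_weight.
have num_neq0 : (p0 + p1) * p1 != 0 by rewrite mulf_neq0 // gt_eqF ?addr_gt0.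
move/(mulfI num_neq0)/invr_inj/addrI/(mulIf (lt0r_neq0 p0_gt0))/eqP.
by rewrite eqrXn2 // ?ltW // => /eqP.
Qed.

Lemma pair_point_false_between l : 1 <= l -> - p1 <= pair_point l false < p0.
Proof.
move=> l_ge1; have l_gt0 : 0 < l by apply: lt_le_trans l_ge1.
rewrite /pair_point lerN2 ler_pdivrMr // ler_peMr ?l_ge1 ?ltW //=.
by rewrite (@lt_trans _ _ 0) // oppr_lt0 divr_gt0.
Qed.

Lemma pair_point_true_gt l : 1 < l -> p0 < pair_point l true.
Proof. by move=> l_gt1; rewrite /pair_point ltr_pMl. Qed.

End TwoPointLaws.

Lemma injective_seq_eventually_avoids (A : Type) (I : finType)
    (g : nat -> A) (h : I -> A) :
  injective g -> exists N, forall n i, g (N + n)%N <> h i.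
Proof.
move=> g_inj.
pose hit i := if pselect (exists n, g n = h i) is left e
  then (sval (cid e)).+1 else 0%N.
exists (\max_i hit i) => n i gNn.
have [m gm hit_i] : exists2 m, g m = h i & hit i = m.+1.
  rewrite /hit; case: pselect => [e|[]]; last by exists (\max_i hit i + n)%N.
  by case: cid => m /= gm; exists m.
have := @leq_bigmax _ hit i; rewrite hit_i.
by rewrite (g_inj _ _ (etrans gm (esym gNn))) ltnNge leq_addr.
Qed.

Definition relabel_model (R : realType) J K (s : 'S_K)
    (Q : qmatrix J K) (T : itemparams R J K) (p : propparams R K) :
  qmatrix J K * itemparams R J K * propparams R K :=
  (\matrix_(j, k) Q j (s k), fun j a => T j (relabel s a), fun a => p (relabel s a)).

Lemma model_equiv_relabel (R : realType) J K (Qb Q : qmatrix J K)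
    (Tb T : itemparams R J K) (pb p : propparams R K) :
  model_equiv Qb Tb pb Q T p -> exists s, (Qb, Tb, pb) = relabel_model s Q T p.
Proof.
case=> s [Q_eq [T_eq p_eq]]; exists s; congr (_, _, _).
- by apply/matrixP => j k; rewrite mxE.
- by apply/funext => j; apply/funext => a.
- exact/funext.
Qed.

Lemma sum_split_pair (V : nmodType) (I : finType) (i1 i0 : I) (F : I -> V) :
  i1 != i0 ->
  \sum_i F i = \sum_b F (if b then i1 else i0) + \sum_(i | (i != i1) && (i != i0)) F i.
Proof.
by move=> i10; rewrite big_bool (bigD1 i1) // (bigD1 i0) /= 1?eq_sym // addrA.
Qed.

Lemma prodr_le_factor (R : numDomainType) (I : finType) (x : I -> R) i :
  (forall j, 0 <= x j <= 1) -> \prod_j x j <= x i.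
Proof.
move=> x01; rewrite (bigD1 i) //= ler_piMr //; first by case/andP: (x01 i).
by apply: prodr_ile1 => j _; apply: x01.
Qed.

Definition full_attr K : attr K := [ffun => true].

Definition all_but K (k : 'I_K) : attr K := [ffun i => i != k].

Lemma full_neq_all_but K (k : 'I_K) : full_attr K != all_but k.
Proof. by apply/eqP => /ffunP /(_ k); rewrite !ffunE eqxx. Qed.

Lemma dominates_full J K (Q : qmatrix J K) j : dominates Q j (full_attr K).
Proof. by apply/forallP => k; rewrite ffunE implybT. Qed.

Lemma masked_dominates J K (Q : qmatrix J K) j a :
  dominates Q j a -> masked Q j a = masked Q j (full_attr K).
Proof.
move/forallP => dom; apply/ffunP => k; rewrite !ffunE.
by case: (Q j k) (dom k) => [/= ->|]; rewrite ?andbF.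
Qed.

Section PerturbedModel.

Variables (R : realType) (J K : nat) (Q : qmatrix J K).
Variables (T : itemparams R J K) (p : propparams R K) (k0 : 'I_K).
Hypothesis QTp_valid : valid_params Q T p.

Local Notation a1 := (full_attr K).
Local Notation a0 := (all_but k0).
Local Notation pf := (p a1).
Local Notation pd := (p a0).

Definition pair_class (b : bool) : attr K := if b then a1 else a0.

Let p_gt0 a : 0 < p a. Proof. by have [] := QTp_valid. Qed.
Let p_sum1 : \sum_a p a = 1. Proof. by have [_ []] := QTp_valid. Qed.
Let T_gt0 j a : 0 < T j a.
Proof. by have [_ [_ [/(_ j a)/andP[]]]] := QTp_valid. Qed.
Let T_lt1 j a : T j a < 1.
Proof. by have [_ [_ [/(_ j a)/andP[]]]] := QTp_valid. Qed.
Let T_masked j a a' : masked Q j a = masked Q j a' -> T j a = T j a'.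
Proof. by have [_ [_ [_ [eqT _]]]] := QTp_valid; apply: eqT. Qed.
Let T_mono j a a' : dominates Q j a -> ~~ dominates Q j a' -> T j a' < T j a.
Proof. by have [_ [_ [_ [_ ltT]]]] := QTp_valid; apply: ltT. Qed.
Let pfd_gt0 : 0 < pd + pf. Proof. exact: addr_gt0. Qed.

Lemma T_le_full j a : T j a <= T j a1.
Proof.
have [dom|ndom] := boolP (dominates Q j a); last exact/ltW/T_mono/ndom/dominates_full.
by rewrite (T_masked (masked_dominates dom)).
Qed.

Lemma T_all_but_eq j : ~~ Q j k0 -> T j a0 = T j a1.
Proof.
move/negbTE => Qjk0; apply: T_masked; apply/ffunP => k; rewrite !ffunE.
by case: (eqVneq k k0) => [->|]; rewrite ?Qjk0 ?andbF.
Qed.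

Lemma T_all_but_lt j : Q j k0 -> T j a0 < T j a1.
Proof.
move=> Qjk0; apply: T_mono; first exact: dominates_full.
by apply/forallP => /(_ k0); rewrite Qjk0 ffunE eqxx.
Qed.

Definition centre j := (pd * T j a0 + pf * T j a1) / (pd + pf).
Definition gap j := (T j a1 - T j a0) / (pd + pf).
Definition line j t := centre j + t * gap j.

Lemma line_pair1 j b : line j (pair_point pd pf 1 b) = T j (pair_class b).
Proof.
have pfd_neq0 := lt0r_neq0 pfd_gt0.
by rewrite pair_point1 /line /centre /gap; case: b => /=; field.
Qed.

Lemma gap_ge0 j : 0 <= gap j.
Proof.
have [Qjk0|nQjk0] := boolP (Q j k0); last by rewrite /gap T_all_but_eq ?subrr ?mul0r.
by rewrite divr_ge0 ?ltW // subr_gt0 T_all_but_lt.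
Qed.

Lemma gap_gt0 j : Q j k0 -> 0 < gap j.
Proof. by move=> Qjk0; rewrite divr_gt0 // subr_gt0 T_all_but_lt. Qed.

Lemma gap_eq0 j : ~~ Q j k0 -> gap j = 0.
Proof. by move=> nQjk0; rewrite /gap T_all_but_eq ?subrr ?mul0r. Qed.

Lemma line_le j s t : s <= t -> line j s <= line j t.
Proof. by move=> st; rewrite lerD2l ler_wpM2r ?gap_ge0. Qed.

Lemma line_lt j s t : Q j k0 -> s < t -> line j s < line j t.
Proof. by move=> Qjk0 st; rewrite ltrD2l ltr_pM2r ?gap_gt0. Qed.

Lemma line_lt1 j t : 1 < t -> t - 1 <= 1 - T j a1 -> line j (t * pd) < 1.
Proof.
move=> t_gt1 t_small.
have pd_gap_lt1 : pd * gap j < 1.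
  have : pd * gap j + pf * gap j = T j a1 - T j a0.
    by rewrite -mulrDl /gap mulrC mulfVK ?lt0r_neq0.
  have := T_gt0 j a0; have := T_lt1 j a1; have := p_gt0 a1; have := gap_ge0 j.
  nra.
move: t_small; rewrite -(line_pair1 j true) /line /= mul1r.
have := gap_ge0 j; have := p_gt0 a0; nra.
Qed.

(* Only a1 dominates the rows of the items requiring k0, so their probabilities
   on a0 and on a1 are no longer tied to those of the other profiles. *)
Definition perturbed_Q : qmatrix J K := \matrix_(j, k) (Q j k0 || Q j k).

Definition perturbed_T (l : R) : itemparams R J K := fun j a =>
  if a == a1 then line j (pair_point pd pf l true)
  else if a == a0 then line j (pair_point pd pf l false) else T j a.

Definition perturbed_p (l : R) : propparams R K := fun a =>
  if a == a1 then pair_weight pd pf l true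
  else if a == a0 then pair_weight pd pf l false else p a.

Definition perturbed_model (l : R) := (perturbed_Q, perturbed_T l, perturbed_p l).

Let a10 : a1 != a0 := full_neq_all_but k0.

Lemma perturbed_T_pair l j b :
  perturbed_T l j (pair_class b) = line j (pair_point pd pf l b).
Proof. by rewrite /perturbed_T; case: b => /=; rewrite ?eqxx // eq_sym (negbTE a10). Qed.

Lemma perturbed_p_pair l b : perturbed_p l (pair_class b) = pair_weight pd pf l b.
Proof. by rewrite /perturbed_p; case: b => /=; rewrite ?eqxx // eq_sym (negbTE a10). Qed.

Lemma perturbed_T_other l j a : a != a1 -> a != a0 -> perturbed_T l j a = T j a.
Proof. by rewrite /perturbed_T => /negbTE -> /negbTE ->. Qed.

Lemma perturbed_p_other l a : a != a1 -> a != a0 -> perturbed_p l a = p a.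
Proof. by rewrite /perturbed_p => /negbTE -> /negbTE ->. Qed.

Lemma perturbed_T_unaffected l j a : ~~ Q j k0 -> perturbed_T l j a = T j a.
Proof.
move=> nQjk0; have line_const t : line j t = T j a1.
  by rewrite -(line_pair1 j true) /line gap_eq0 // !mulr0.
rewrite /perturbed_T; case: eqP => [->|_]; first exact: line_const.
by case: eqP => [->|_] //; rewrite line_const T_all_but_eq.
Qed.

Lemma pair_weight1_class b : pair_weight pd pf 1 b = p (pair_class b).
Proof. by rewrite pair_weight1; case: b. Qed.

Lemma perturbed_p_gt0 l a : 0 < l -> 0 < perturbed_p l a.
Proof.
by move=> l_gt0; rewrite /perturbed_p; do 2?case: eqP => _; rewrite ?pair_weight_gt0.
Qed.

Lemma perturbed_p_sum1 l : 0 < l -> \sum_a perturbed_p l a = 1.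
Proof.
move=> l_gt0; rewrite -p_sum1 !(sum_split_pair _ a10); congr (_ + _); last first.
  by apply: eq_bigr => a /andP[a1' a0']; rewrite perturbed_p_other.
transitivity (\sum_b pair_weight pd pf l b * pair_point pd pf l b ^+ 0).
  by apply: eq_bigr => b _; rewrite expr0 mulr1 perturbed_p_pair.
rewrite pair_moments //.
by apply: eq_bigr => b _; rewrite expr0 mulr1 pair_weight1_class.
Qed.

Lemma perturbed_T_bounds l j a :
  1 < l -> l - 1 <= 1 - T j a1 -> 0 < perturbed_T l j a < 1.
Proof.
move=> l_gt1 l_small; have l_ge1 := ltW l_gt1.
have /andP[lo_false hi_false] := pair_point_false_between (p_gt0 a0) (p_gt0 a1) l_ge1.
have [->|a_neq1] := eqVneq a a1.
  rewrite (perturbed_T_pair l j true) line_lt1 // andbT.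
  rewrite (lt_le_trans (T_gt0 j a1)) // -(line_pair1 j true) pair_point1.
  exact/line_le/ltW/pair_point_true_gt.
have [->|a_neq0] := eqVneq a a0.
  rewrite (perturbed_T_pair l j false); apply/andP; split.
    by rewrite (lt_le_trans (T_gt0 j a0)) // -(line_pair1 j false) pair_point1 line_le.
  rewrite (le_lt_trans _ (T_lt1 j a1)) // -(line_pair1 j true) pair_point1.
  by rewrite line_le ?ltW.
by rewrite perturbed_T_other ?T_gt0 ?T_lt1.
Qed.

Lemma perturbed_T_masked l j a a' :
  masked perturbed_Q j a = masked perturbed_Q j a' ->
  perturbed_T l j a = perturbed_T l j a'.
Proof.
move/ffunP => eq_masked; have [Qjk0|nQjk0] := boolP (Q j k0).
  congr perturbed_T; apply/ffunP => k.
  by have := eq_masked k; rewrite !ffunE mxE Qjk0 !andbT.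
rewrite !perturbed_T_unaffected //; apply/T_masked/ffunP => k.
by have := eq_masked k; rewrite !ffunE mxE (negbTE nQjk0).
Qed.

Lemma perturbed_T_mono l j a a' : 1 < l ->
  dominates perturbed_Q j a -> ~~ dominates perturbed_Q j a' ->
  perturbed_T l j a' < perturbed_T l j a.
Proof.
move=> l_gt1; have [Qjk0|nQjk0] := boolP (Q j k0); last first.
  have domE b : dominates perturbed_Q j b = dominates Q j b.
    by apply: eq_forallb => k; rewrite mxE (negbTE nQjk0).
  by rewrite !domE !perturbed_T_unaffected //; apply: T_mono.
move=> /forallP dom ndom.
have -> : a = a1 by apply/ffunP => k; have := dom k; rewrite ffunE mxE Qjk0.
have a'_neq1 : a' != a1 by apply: contraNneq ndom => ->; apply: dominates_full.
have pd_lt := pair_point_true_gt pf (p_gt0 a0) l_gt1.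
rewrite (perturbed_T_pair l j true).
have [->|a'_neq0] := eqVneq a' a0.
  rewrite (perturbed_T_pair l j false) line_lt // (lt_trans _ pd_lt) //.
  by have /andP[] := pair_point_false_between (p_gt0 a0) (p_gt0 a1) (ltW l_gt1).
rewrite perturbed_T_other // (le_lt_trans (T_le_full j a')) //.
by rewrite -(line_pair1 j true) pair_point1 line_lt.
Qed.

Lemma perturbed_model_valid l : 1 < l -> (forall j, l - 1 <= 1 - T j a1) ->
  valid_params perturbed_Q (perturbed_T l) (perturbed_p l).
Proof.
move=> l_gt1 l_small; have l_gt0 : 0 < l by apply: lt_trans l_gt1.
split; first by move=> a; apply: perturbed_p_gt0.
split; first exact: perturbed_p_sum1.
split; first by move=> j a; apply: perturbed_T_bounds.
split; first exact: perturbed_T_masked.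
by move=> j a a'; apply: perturbed_T_mono.
Qed.

Lemma perturbed_resp_distr l r : 0 < l -> (#|[set j | Q j k0]| < 3)%N ->
  resp_distr (perturbed_T l) (perturbed_p l) r = resp_distr T p r.
Proof.
move=> l_gt0 few_items; rewrite /resp_distr !(sum_split_pair _ a10).
congr (_ + _); last first.
  apply: eq_bigr => a /andP[a_neq1 a_neq0]; rewrite perturbed_p_other //.
  by congr (_ * _); apply: eq_bigr => j _; rewrite perturbed_T_other.
pose P := \prod_j ((if r j then centre j else 1 - centre j)%:P
                   + ((if r j then 1 else -1) * gap j) *: 'X).
have P_line t : P.[t] = \prod_j (if r j then line j t else 1 - line j t).
  by rewrite horner_prod; apply: eq_bigr => j _; rewrite horner_response_factor.
have size_P : (size P <= 3)%N.
  apply: leq_trans few_items; apply: size_prod_affine => j.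
  by rewrite inE => /gap_eq0 ->; rewrite mulr0.
transitivity (\sum_b pair_weight pd pf l b * P.[pair_point pd pf l b]).
  apply: eq_bigr => b _; rewrite perturbed_p_pair P_line.
  by congr (_ * _); apply: eq_bigr => j _; rewrite perturbed_T_pair.
rewrite (horner_sum_eq_moments (w2 := pair_weight pd pf 1)
                               (t2 := pair_point pd pf 1) size_P); last first.
  by move=> i; apply: pair_moments.
apply: eq_bigr => b _; rewrite pair_weight1_class P_line.
by congr (_ * _); apply: eq_bigr => j _; rewrite line_pair1.
Qed.

Lemma perturbed_model_inj l m : 0 < l -> 0 < m ->
  perturbed_model l = perturbed_model m -> l = m.
Proof.
move=> l_gt0 m_gt0 /(congr1 (fun M => M.2 a1)) /=.
by rewrite !(perturbed_p_pair _ true); apply: pair_weight_inj.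
Qed.

Definition scale_seq (n : nat) : R := 1 + (\prod_j (1 - T j a1)) / n.+1%:R.

Lemma scale_seq_gt1 n : 1 < scale_seq n.
Proof.
rewrite ltrDl divr_gt0 // prodr_gt0 // => j _.
by rewrite subr_gt0 T_lt1.
Qed.

Lemma scale_seq_small n j : scale_seq n - 1 <= 1 - T j a1.
Proof.
have T01 i : 0 <= 1 - T i a1 <= 1 by rewrite subr_ge0 ltW //= gerBl ltW.
rewrite addrAC subrr add0r (le_trans _ (prodr_le_factor j T01)) //.
by rewrite ler_pdivrMr // ler_peMr ?ler1n // prodr_ge0 // => i _; case/andP: (T01 i).
Qed.

Lemma perturbed_model_seq_inj : injective (fun n => perturbed_model (scale_seq n)).
Proof.
have scale_gt0 n : 0 < scale_seq n by apply: lt_trans (scale_seq_gt1 n).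
move=> n1 n2 /(perturbed_model_inj (scale_gt0 n1) (scale_gt0 n2)) /addrI.
have eps_neq0 : \prod_j (1 - T j a1) != 0.
  by rewrite prodf_seq_neq0; apply/allP => j _; rewrite subr_eq0 gt_eqF ?T_lt1.
by move/(mulfI eps_neq0)/invr_inj/eqP; rewrite eqr_nat => /eqP [].
Qed.

End PerturbedModel.

Theorem theorem3 (R : realType) (J K : nat) (Q : qmatrix J K)
    (T : itemparams R J K) (p : propparams R K) :
  (forall j : 'I_J, exists k : 'I_K, Q j k) ->
  (exists k : 'I_K, (#|[set j : 'I_J | Q j k]| < 3)%N) ->
  valid_params Q T p ->
  exists f : nat -> qmatrix J K * itemparams R J K * propparams R K,
    injective f /\
    forall n, let: (Qb, Tb, pb) := f n in
      valid_params Qb Tb pb /\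
      ~ model_equiv Qb Tb pb Q T p /\
      (forall r : {ffun 'I_J -> bool}, resp_distr Tb pb r = resp_distr T p r).
Proof.
(* The construction does not need Q to have nonzero rows. *)
move=> _ [k0 few_items] QTp_valid.
pose model n := perturbed_model Q T p k0 (scale_seq T n).
have model_inj : injective model := perturbed_model_seq_inj QTp_valid.
have [N avoid] := @injective_seq_eventually_avoids _ _ model
  (fun s => relabel_model s Q T p) model_inj.
exists (fun n => model (N + n)%N); split => [n1 n2 /model_inj/addnI //|n].
have l_gt1 := scale_seq_gt1 QTp_valid (N + n).
split; first exact: perturbed_model_valid l_gt1 (scale_seq_small QTp_valid _).
split; first by case/model_equiv_relabel => s /avoid.
by move=> r; apply: perturbed_resp_distr few_items => //; apply: lt_trans l_gt1.
Qed.
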